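(* Let $n\ge1$, $\lambda>0$, $\alpha>0$, and $\mu_1,\dots,\mu_n,\mu^*_1,\dots,\mu^*_n\in\mathbb{R}$. Let $X_1,\dots,X_n$ be independent with $X_i\sim\mathrm{Fr\acute{e}}(\mu_i,\lambda,\alpha)$ and $X^*_1,\dots,X^*_n$ be independent with $X^*_i\sim\mathrm{Fr\acute{e}}(\mu^*_i,\lambda,\alpha)$. If $\sum_{i=j}^{n}\mu^*_{(i)}\le\sum_{i=j}^{n}\mu_{(i)}$ for all $j=1,\dots,n$, then $X_{n:n}\ge_{\rm rh}X^*_{n:n}$.
   Context: $X\sim \mathrm{Fr\acute{e}}(\mu,\lambda,\alpha)$ means $X$ has distribution function $\exp\{-((x-\mu)/\lambda)^{-\alpha}\}$ for $x>\mu$. $X_{n:n}=\max(X_1,\dots,X_n)$. For a vector $\boldsymbol{x}$, $x_{(1)}\le\dots\le x_{(n)}$ are its components in increasing order. For random variables $X,Y$ with distribution functions $F,G$ and densities, $X\le_{\rm rh}Y$ means $F'(x)/F(x)\le G'(x)/G(x)$ for all $x$ (reversed hazard rate order). *)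

From HB Require Import structures.
From mathcomp Require Import all_boot all_order all_algebra.
From mathcomp Require Import all_classical all_reals all_analysis.
Set Implicit Arguments. Unset Strict Implicit. Unset Printing Implicit Defensive.
Import Order.TTheory GRing.Theory Num.Theory.
Import numFieldNormedType.Exports.
Local Open Scope classical_set_scope.
Local Open Scope ring_scope.

Definition frechet_cdf {R : realType} (mu lam alpha : R) (x : R) : R :=
  if mu < x then expR (- (((x - mu) / lam) `^ (- alpha))) else 0.

Definition distfun {d} {T : measurableType d} {R : realType}
  (P : probability T R) (X : T -> R) (x : R) : R :=
  fine (P (X @^-1` `]-oo, x])).

Definition mutually_independent {d} {T : measurableType d} {R : realType}
  (P : probability T R) (n : nat) (X : 'I_n -> T -> R) : Prop :=
  forall B : 'I_n -> set R, (forall i, measurable (B i)) ->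
    P (\big[setI/setT]_(i < n) (X i @^-1` B i))
    = (\prod_(i < n) P (X i @^-1` B i))%E.

Definition max_rv {T : Type} {R : realType} (n : nat) (X : 'I_n -> T -> R)
  (w : T) : R :=
  let s := [seq X i w | i <- enum 'I_n] in \big[Num.max/head 0 s]_(x <- s) x.

(* x_{(1)} <= ... <= x_{(n)} : the components sorted increasingly
   (0-based: (osort x)`_(i-1) = x_{(i)}). *)
Definition osort {R : realType} (n : nat) (x : 'I_n -> R) : seq R :=
  sort <=%R [seq x i | i <- enum 'I_n].

(* Reversed hazard rate order X <=_rh Y, with F, G the cdfs of X, Y:
   F'(x)/F(x) <= G'(x)/G(x) for all x, where a ratio with vanishing
   denominator is read as +infinity (the usual convention; it amounts to
   requiring G'/G >= F'/F wherever G>0, and that F>0 wherever G>0). *)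
Definition rh_le {R : realType} (F G : R -> R) : Prop :=
  forall x, 0 < G x -> 0 < F x /\ derive1 F x / F x <= derive1 G x / G x.

From HB Require Import structures.
From mathcomp Require Import all_boot all_order all_algebra.
From mathcomp Require Import all_classical all_reals all_analysis.
From mathcomp Require Import ring lra.
Import Order.TTheory GRing.Theory Num.Theory.
Import numFieldNormedType.Exports.
Local Open Scope classical_set_scope.
Local Open Scope ring_scope.

(* If x exceeds every location mu_i, the distribution function of the
   maximum of independent Frechet variables at x is
   exp (- \sum_i ((x - mu_i) / lam)^(-alpha)), so its reversed hazard rate at
   x is \sum_i phi mu_i with phi m = alpha / lam * ((x - m) / lam)^(-alpha-1);
   otherwise the distribution function vanishes at x. On m < x the function
   phi is increasing and convex, hence the weak submajorization of mu^* by mu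
   gives \sum_i phi mu^*_i <= \sum_i phi mu_i (Tomic-Weyl), by Abel summation
   against the nondecreasing slopes of the tangents of phi at the sorted
   mu^*_(i). The last tail-sum hypothesis, max mu^* <= max mu, makes the
   distribution function of X^*_{n:n} positive wherever that of X_{n:n} is. *)

Lemma abel_sum_ge0 (R : numDomainType) (n : nat) (d e : nat -> R) :
  (forall i, (i < n)%N -> 0 <= d i) ->
  (forall i, (i.+1 < n)%N -> d i <= d i.+1) ->
  (forall j, (j < n)%N -> 0 <= \sum_(j <= i < n) e i) ->
  0 <= \sum_(0 <= i < n) d i * e i.
Proof.
move=> d_ge0 d_homo tail_ge0.
have tail_le j : (j < n)%N ->
    d j * \sum_(j <= i < n) e i <= \sum_(j <= i < n) d i * e i.
  have [k] := ubnP (n - j); elim: k j => // k IH j lt_k lt_jn.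
  rewrite !(big_ltn lt_jn) mulrDr lerD2l.
  have [lt_j1n|le_nj1] := ltnP j.+1 n; last by rewrite !big_geq // mulr0.
  apply: le_trans (IH j.+1 _ lt_j1n); last first.
    by rewrite subnS -ltnS prednK ?subn_gt0.
  by apply: ler_wpM2r; [exact: tail_ge0 | exact: d_homo].
case: n d_ge0 d_homo tail_ge0 tail_le => [|n] d_ge0 _ tail_ge0 tail_le.
  by rewrite big_geq.
exact: le_trans (mulr_ge0 (d_ge0 _ _) (tail_ge0 _ _)) (tail_le _ _).
Qed.

Section WeakMajorization.
Context {R : realFieldType} {D : {pred R}} {phi g : R -> R}.
Hypothesis phi_tangent : {in D &, forall s t, phi s + g s * (t - s) <= phi t}.

Lemma tangent_slope_homo : {in D &, {homo g : s t / s <= t}}.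
Proof.
move=> s t Ds Dt; rewrite le_eqVlt => /predU1P[-> //|lt_st].
have := phi_tangent _ _ Ds Dt; have := phi_tangent _ _ Dt Ds.
rewrite -[g s <= g t]subr_le0 -(@pmulr_lle0 _ (t - s)) ?subr_gt0 //.
have -> : (g s - g t) * (t - s) = g s * (t - s) + g t * (s - t) by ring.
lra.
Qed.

Hypothesis slope_ge0 : {in D, forall s, 0 <= g s}.

Lemma weak_majorization_sum_le (a b : seq R) :
  size a = size b -> sorted <=%R a -> {subset a <= D} -> {subset b <= D} ->
  (forall j, (j < size a)%N ->
     \sum_(j <= i < size a) a`_i <= \sum_(j <= i < size a) b`_i) ->
  \sum_(s <- a) phi s <= \sum_(t <- b) phi t.
Proof.
move=> eq_size sorted_a aD bD major.
have aiD i : (i < size a)%N -> a`_i \in D.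
  by move=> ?; apply: aD; rewrite mem_nth.
have biD i : (i < size a)%N -> b`_i \in D.
  by move=> ?; apply: bD; rewrite mem_nth // -eq_size.
rewrite -subr_ge0 [X in X - _](big_nth 0) [X in _ - X](big_nth 0).
rewrite -eq_size -sumrB.
apply: le_trans
  (@abel_sum_ge0 _ _ (fun i => g a`_i) (fun i => b`_i - a`_i) _ _ _) _.
- by move=> i /aiD; exact: slope_ge0.
- move=> i lt_i1; apply: tangent_slope_homo; rewrite ?aiD // 1?ltnW //.
  by apply: (sorted_leq_nth le_trans lexx) => //; rewrite inE // ltnW.
- by move=> j lt_j; rewrite sumrB subr_ge0; exact: major.
- apply: ler_sum_nat => i /andP[_ lt_i]; rewrite lerBrDl.
  by apply: phi_tangent; [exact: aiD | exact: biD].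
Qed.

End WeakMajorization.

Lemma powRN_tangent_le {R : realType} (beta t s : R) :
  0 <= beta -> 0 < t -> 0 < s ->
  t `^ (- beta) - beta * t `^ (- beta - 1) * (s - t) <= s `^ (- beta).
Proof.
move=> beta_ge0 t_gt0 s_gt0; set r := s / t.
have r_gt0 : 0 < r by rewrite divr_gt0.
have ln_r : ln r <= r - 1.
  by have := @le_ln1Dx R (r - 1); rewrite (addrC 1) subrK; apply; lra.
have bernoulli : 1 - beta * (r - 1) <= r `^ (- beta).
  rewrite /powR gt_eqF // (le_trans _ (expR_ge1Dx _)) // lerD2l mulNr lerN2.
  exact: ler_wpM2l.
have -> : s `^ (- beta) = t `^ (- beta) * r `^ (- beta).
  by rewrite -powRM ?ltW // /r mulrC divfK ?gt_eqF.
have -> : t `^ (- beta - 1) = t `^ (- beta) / t.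
  by rewrite powRB ?(powRr1 (ltW t_gt0)) //; apply/implyP => _; rewrite gt_eqF.
have -> : t `^ (- beta) - beta * (t `^ (- beta) / t) * (s - t) =
    t `^ (- beta) * (1 - beta * (r - 1)) by rewrite /r; field; rewrite gt_eqF.
by rewrite ler_pM2l ?powR_gt0.
Qed.

Lemma is_derive_affine {R : realType} (mu lam x : R) :
  is_derive x 1 (fun y : R => (y - mu) / lam) lam^-1.
Proof.
have -> : (fun y => (y - mu) / lam) = lam^-1 \*: (id - cst mu).
  by apply/funext => y; rewrite /= mulrC.
have := is_deriveZ lam^-1
  (is_deriveB (is_derive_id x (1 : R)) (is_derive_cst mu x 1)).
by rewrite subr0 /= [X in is_derive _ _ _ X]mulr1.
Qed.

Section OrderStatistics.
Context {R : realType} {n : nat} (m : 'I_n -> R).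

Lemma size_osort : size (osort m) = n.
Proof. by rewrite size_sort size_map size_enum_ord. Qed.

Lemma sorted_osort : sorted <=%R (osort m).
Proof. exact: sort_sorted le_total _. Qed.

Lemma osortP s : reflect (exists i, s = m i) (s \in osort m).
Proof.
rewrite mem_sort; apply: (iffP mapP) => [[i _ ->]|[i ->]]; first by exists i.
by exists i; rewrite ?mem_enum.
Qed.

Lemma big_osort {V : Type} {idx : V} (op : Monoid.com_law idx) (F : R -> V) :
  \big[op/idx]_(s <- osort m) F s = \big[op/idx]_(i < n) F (m i).
Proof. by rewrite (perm_big _ (permEl (perm_sort _ _))) big_map big_enum. Qed.

Lemma le_osort_last i : m i <= (osort m)`_n.-1.
Proof.
have /(nthP 0)[k + <-] : m i \in osort m by apply/osortP; exists i.
rewrite size_osort => lt_kn.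
have n_gt0 : (0 < n)%N by apply: leq_ltn_trans lt_kn.
apply: (sorted_leq_nth le_trans lexx 0 sorted_osort).
- by rewrite inE size_osort.
- by rewrite inE size_osort ltn_predL.
- by rewrite -ltnS prednK.
Qed.

End OrderStatistics.

Lemma tail_sums_le_last {R : realType} {n : nat} {a b : 'I_n -> R} :
  (0 < n)%N ->
  (forall j : nat, (j < n)%N ->
     \sum_(j <= i < n) (osort a)`_i <= \sum_(j <= i < n) (osort b)`_i) ->
  (osort a)`_n.-1 <= (osort b)`_n.-1.
Proof.
move=> n_gt0; have lt_n1 : (n.-1 < n)%N by rewrite ltn_predL.
by move=> /(_ _ lt_n1); rewrite !(big_ltn lt_n1) prednK // !big_geq // !addr0.
Qed.

Lemma max_rv_le {T : Type} {R : realType} {n : nat} (X : 'I_n -> T -> R)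
    (w : T) (x : R) :
  (0 < n)%N -> max_rv X w <= x <-> forall i, X i w <= x.
Proof.
case: n X => // n X _; rewrite /max_rv; split => [le_max_x i | le_X_x].
- apply: le_trans le_max_x; apply: le_bigmax_seq => //.
  by apply: map_f; rewrite mem_enum.
- rewrite big_seq; apply: bigmax_le => [|_ /mapP[i _ ->] //].
  by rewrite enum_ordSl; exact: le_X_x.
Qed.

Lemma preimage_max_rv_le {T : Type} {R : realType} {n : nat}
    (X : 'I_n -> T -> R) (x : R) :
  (0 < n)%N ->
  max_rv X @^-1` `]-oo, x] = \big[setI/setT]_(i < n) (X i @^-1` `]-oo, x]).
Proof.
move=> n_gt0; rewrite -bigcap_seq; apply/seteqP; split => w /=.
- rewrite in_itv /= max_rv_le // => le_X_x i _.
  by rewrite /= in_itv; exact: le_X_x.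
- move=> le_X_x; rewrite in_itv /= max_rv_le // => i.
  by have := le_X_x i (mem_index_enum i); rewrite /= in_itv.
Qed.

Lemma distfun_max_rv {d} {T : measurableType d} {R : realType}
    (P : probability T R) (n : nat) (X : 'I_n -> T -> R) (x : R) :
  (0 < n)%N -> (forall i, measurable_fun setT (X i)) ->
  mutually_independent P X ->
  distfun P (max_rv X) x = \prod_(i < n) distfun P (X i) x.
Proof.
move=> n_gt0 mX indX; rewrite /distfun preimage_max_rv_le // indX; last first.
  by move=> i; exact: measurable_itv.
have finP i : P (X i @^-1` `]-oo, x]) = (fine (P (X i @^-1` `]-oo, x])))%:E.
  rewrite fineK // fin_num_measure // -[X in measurable X]setTI.
  by apply: mX => //; exact: measurable_itv.
by under eq_bigr do rewrite finP; rewrite prodEFin.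
Qed.

Definition frechet_rhr {R : realType} (lam alpha mu x : R) : R :=
  alpha / lam * ((x - mu) / lam) `^ (- alpha - 1).

(* The derivative of [frechet_rhr lam alpha mu x] with respect to [mu]. *)
Definition frechet_rhr_slope {R : realType} (lam alpha mu x : R) : R :=
  alpha * (alpha + 1) / lam ^+ 2 * ((x - mu) / lam) `^ (- alpha - 2).

Section FrechetReversedHazardRate.
Context {R : realType} {lam alpha : R}.
Hypotheses (lam_gt0 : 0 < lam) (alpha_gt0 : 0 < alpha).

Lemma frechet_cdf_gt0 (mu x : R) : (0 < frechet_cdf mu lam alpha x) = (mu < x).
Proof.
by rewrite /frechet_cdf; case: (ltP mu x) => _; rewrite ?expR_gt0 ?ltxx.
Qed.

Lemma prod_frechet_cdf_gt0 (n : nat) (m : 'I_n -> R) (x : R) :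
  0 < \prod_(i < n) frechet_cdf (m i) lam alpha x <-> forall i, m i < x.
Proof.
split=> [prod_gt0 i | lt_mx]; last first.
  by apply: prodr_gt0 => i _; rewrite frechet_cdf_gt0.
case: (ltP (m i) x) => // le_xm; move: prod_gt0.
by rewrite (bigD1 i) //= /frechet_cdf (le_gtF le_xm) mul0r ltxx.
Qed.

Lemma prod_frechet_cdfE (n : nat) (m : 'I_n -> R) (y : R) :
  (forall i, m i < y) ->
  \prod_(i < n) frechet_cdf (m i) lam alpha y =
  expR (\sum_(i < n) - ((y - m i) / lam) `^ (- alpha)).
Proof.
move=> lt_my; rewrite expR_sum; apply: eq_bigr => i _.
by rewrite /frechet_cdf lt_my.
Qed.

Lemma is_derive_frechet_log_cdf (mu x : R) : mu < x ->
  is_derive x 1 (fun y => - ((y - mu) / lam) `^ (- alpha))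
    (frechet_rhr lam alpha mu x).
Proof.
move=> lt_mux; have u_gt0 : 0 < (x - mu) / lam by rewrite divr_gt0 ?subr_gt0.
have := is_deriveN (is_derive1_comp (g := fun y => (y - mu) / lam)
  (is_derive1_powR (- alpha) u_gt0)
  (is_derive_affine mu lam x)).
by rewrite /frechet_rhr !mulNr opprK mulrAC.
Qed.

Lemma prod_frechet_cdf_rhr {n : nat} {m : 'I_n -> R} {x : R} :
  (forall i, m i < x) ->
  derive1 (fun y => \prod_(i < n) frechet_cdf (m i) lam alpha y) x /
    \prod_(i < n) frechet_cdf (m i) lam alpha x =
  \sum_(i < n) frechet_rhr lam alpha (m i) x.
Proof.
move=> lt_mx.
pose L := \sum_(i < n) (fun y => - ((y - m i) / lam) `^ (- alpha)).
have dL : is_derive x 1 L (\sum_(i < n) frechet_rhr lam alpha (m i) x).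
  by apply: is_derive_sum => i; exact: is_derive_frechet_log_cdf.
have expL : \forall y \near x,
    (expR \o L) y = \prod_(i < n) frechet_cdf (m i) lam alpha y.
  have : \forall y \near x, forall i, m i < y.
    exact: filter_forall (fun i => lt_nbhsr (lt_mx i)).
  by apply: filterS => y lt_my; rewrite /= prod_frechet_cdfE // /L fct_sumE.
have dF := near_eq_is_derive expL (is_derive1_comp (is_derive_expR (L x)) dL).
rewrite derive1E (@derive_val _ _ _ _ _ _ _ dF).
rewrite prod_frechet_cdfE // /L fct_sumE.
by rewrite mulrAC divff ?mul1r // gt_eqF // expR_gt0.
Qed.

Lemma frechet_rhr_tangent (x : R) :
  {in [pred m | m < x] &, forall a b,
    frechet_rhr lam alpha a x + frechet_rhr_slope lam alpha a x * (b - a)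
      <= frechet_rhr lam alpha b x}.
Proof.
move=> a b; rewrite !inE => lt_ax lt_bx.
set t := (x - a) / lam; set s := (x - b) / lam.
have t_gt0 : 0 < t by rewrite divr_gt0 ?subr_gt0.
have s_gt0 : 0 < s by rewrite divr_gt0 ?subr_gt0.
have c_ge0 : 0 <= alpha / lam by rewrite divr_ge0 ?ltW.
have tangentE : alpha / lam *
    (t `^ (- alpha - 1) - (alpha + 1) * t `^ (- alpha - 2) * (s - t)) =
    frechet_rhr lam alpha a x + frechet_rhr_slope lam alpha a x * (b - a).
  by rewrite /frechet_rhr /frechet_rhr_slope -/t /s /t; field; rewrite gt_eqF.
have := powRN_tangent_le _ _ _ (ltW (addr_gt0 alpha_gt0 ltr01)) t_gt0 s_gt0.
have -> : - (alpha + 1) - 1 = - alpha - 2 by ring.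
by rewrite opprD => /(ler_wpM2l c_ge0); rewrite tangentE.
Qed.

Lemma frechet_rhr_slope_ge0 (mu x : R) : 0 <= frechet_rhr_slope lam alpha mu x.
Proof.
rewrite /frechet_rhr_slope mulr_ge0 ?powR_ge0 // divr_ge0 ?sqr_ge0 //.
by rewrite mulr_ge0 ?addr_ge0 ?ltW.
Qed.

Lemma frechet_rhr_sum_le (n : nat) (mu mus : 'I_n -> R) (x : R) :
  (forall i, mu i < x) -> (forall i, mus i < x) ->
  (forall j : nat, (j < n)%N ->
     \sum_(j <= i < n) (osort mus)`_i <= \sum_(j <= i < n) (osort mu)`_i) ->
  \sum_(i < n) frechet_rhr lam alpha (mus i) x
    <= \sum_(i < n) frechet_rhr lam alpha (mu i) x.
Proof.
move=> lt_mux lt_musx major.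
rewrite -(big_osort mus _ (frechet_rhr lam alpha ^~ x)).
rewrite -(big_osort mu _ (frechet_rhr lam alpha ^~ x)).
apply: (weak_majorization_sum_le (frechet_rhr_tangent x)).
- by move=> m _; exact: frechet_rhr_slope_ge0.
- by rewrite !size_osort.
- exact: sorted_osort.
- by move=> _ /osortP[i ->]; rewrite inE.
- by move=> _ /osortP[i ->]; rewrite inE.
- by rewrite size_osort.
Qed.

End FrechetReversedHazardRate.

Lemma distfun_max_frechet {d} {T : measurableType d} {R : realType}
    {P : probability T R} {n : nat} {lam alpha : R} {m : 'I_n -> R}
    {Y : 'I_n -> T -> R} :
  (0 < n)%N -> (forall i, measurable_fun setT (Y i)) ->
  mutually_independent P Y ->
  (forall i x, distfun P (Y i) x = frechet_cdf (m i) lam alpha x) ->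
  distfun P (max_rv Y) = fun x => \prod_(i < n) frechet_cdf (m i) lam alpha x.
Proof.
move=> n_gt0 mY indY cdfY; apply/funext => x.
by rewrite distfun_max_rv //; apply: eq_bigr => i _; rewrite cdfY.
Qed.

Theorem mainTheorem2 (R : realType) (n : nat) (lam alpha : R)
  (mu mus : 'I_n -> R)
  (d1 : measure_display) (T1 : measurableType d1) (P1 : probability T1 R)
  (X : 'I_n -> T1 -> R)
  (d2 : measure_display) (T2 : measurableType d2) (P2 : probability T2 R)
  (Xs : 'I_n -> T2 -> R) :
  (0 < n)%N -> 0 < lam -> 0 < alpha ->
  (forall i, measurable_fun setT (X i)) ->
  (forall i, measurable_fun setT (Xs i)) ->
  mutually_independent P1 X ->
  mutually_independent P2 Xs ->
  (forall i x, distfun P1 (X i) x = frechet_cdf (mu i) lam alpha x) ->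
  (forall i x, distfun P2 (Xs i) x = frechet_cdf (mus i) lam alpha x) ->
  (forall j : nat, (j < n)%N ->
     \sum_(j <= i < n) (osort mus)`_i <= \sum_(j <= i < n) (osort mu)`_i) ->
  rh_le (distfun P2 (max_rv Xs)) (distfun P1 (max_rv X)).
Proof.
move=> n_gt0 lam_gt0 alpha_gt0 mX mXs indX indXs cdfX cdfXs major.
rewrite (distfun_max_frechet n_gt0 mX indX cdfX).
rewrite (distfun_max_frechet n_gt0 mXs indXs cdfXs).
move=> x /prod_frechet_cdf_gt0 lt_mux.
have lt_musx i : mus i < x.
  apply: le_lt_trans (le_osort_last mus i) _.
  apply: le_lt_trans (tail_sums_le_last n_gt0 major) _.
  have /osortP[k ->] : (osort mu)`_n.-1 \in osort mu.
    by rewrite mem_nth // size_osort ltn_predL.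
  exact: lt_mux.
split; first exact/prod_frechet_cdf_gt0.
(* Without the patterns, this rewrite takes minutes. *)
rewrite [leLHS](prod_frechet_cdf_rhr lam_gt0 lt_musx).
rewrite [leRHS](prod_frechet_cdf_rhr lam_gt0 lt_mux).
exact: frechet_rhr_sum_le.
Qed.
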